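(* If $\mathcal{K}$ and $\mathcal{J}$ are elements of infinite order in $\mathcal{C}$ and $\Delta([\mathcal{K}],[\mathcal{J}])=0$, then there exist $a,b\in\mathbb{Z}$ such that $a\mathcal{K}=b\mathcal{J}\neq0$.
   Context: $\mathcal{C}$ is the smooth knot concordance group (knots in $S^3$ modulo smooth concordance, operation connected sum, inverse $-\mathcal{K}$ the reverse mirror image). $d(\mathcal{K},\mathcal{J})=g_4(\mathcal{K}\,\#\,-\mathcal{J})$, $g_4$ the smooth four-genus. Let $\mathcal{C}^\circ=\mathcal{C}\setminus\{0\}$; $\mathcal{K}\sim'\mathcal{J}$ if there exist $\mathcal{M}\in\mathcal{C}$ and $r,s\in\mathbb{Z}$ with $\mathcal{K}=r\mathcal{M}$, $\mathcal{J}=s\mathcal{M}$; $\sim$ is the equivalence relation generated by $\sim'$; $\mathbb{P}(\mathcal{C})=\mathcal{C}^\circ/\sim$ with classes $[\mathcal{K}]$. Define $\delta([\mathcal{K}],[\mathcal{J}])=\min\{d(\mathcal{K}',\mathcal{J}'):\mathcal{K}'\in[\mathcal{K}],\mathcal{J}'\in[\mathcal{J}]\}$ and $\Delta([\mathcal{K}],[\mathcal{J}])=\min\sum_{i=0}^{n-1}\delta([\mathcal{K}_i],[\mathcal{K}_{i+1}])$ over all finite sequences of classes with $[\mathcal{K}_0]=[\mathcal{K}]$, $[\mathcal{K}_n]=[\mathcal{J}]$. *)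

(* The smooth knot concordance group C is modelled abstractly:
   an abelian group (zmodType) G together with the smooth four-genus
   g4 : G -> nat, of which only the property "g4 x = 0 <-> x = 0" (a knot is
   slice iff it is zero in C) is assumed. *)
From HB Require Import structures.
From mathcomp Require Import all_boot all_order all_algebra.
From Stdlib Require Import Relations ClassicalEpsilon.
Set Implicit Arguments. Unset Strict Implicit. Unset Printing Implicit Defensive.
Import Order.TTheory GRing.Theory Num.Theory.
Local Open Scope ring_scope.

(* least element of a set of naturals (arbitrary if the set is empty) *)
Definition natinf (P : nat -> Prop) : nat :=
  epsilon (inhabits 0%N) (fun n => P n /\ forall m, P m -> (n <= m)%N).

Section Concordance.
Variables (G : zmodType) (g4 : G -> nat).

Definition dist (K J : G) : nat := g4 (K - J).

Definition simp (K J : G) : Prop :=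
  K != 0 /\ J != 0 /\ exists (M : G) (r s : int), K = M *~ r /\ J = M *~ s.

Definition sim (K J : G) : Prop :=
  K != 0 /\ J != 0 /\ clos_refl_sym_trans G simp K J.

Definition delta (K J : G) : nat :=
  natinf (fun n => exists K' J', sim K K' /\ sim J J' /\ dist K' J' = n).

Definition Delta (K J : G) : nat :=
  natinf (fun n => exists (x0 : G) (xs : seq G),
    x0 != 0 /\ all (fun x => x != 0) xs /\
    sim K x0 /\ sim (last x0 xs) J /\
    sumn (pairmap delta x0 xs) = n).

Definition infinite_order (K : G) : Prop := forall n : nat, (0 < n)%N -> K *+ n != 0.

End Concordance.

(** If [Delta K J = 0], every link of a minimising chain has [delta = 0];
    since the four-genus vanishes only on [0], consecutive classes share a
    representative, hence [K ~ J].  A single move [r M ~' s M] preserves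
    infinite order and [s (r M) = r (s M)] is a nonzero common multiple;
    commensurability is transitive on elements of infinite order. *)
From HB Require Import structures.
From mathcomp Require Import all_boot all_order all_algebra.
From Stdlib Require Import Relations Classical ClassicalEpsilon.
Set Implicit Arguments.
Unset Strict Implicit.
Unset Printing Implicit Defensive.

Import Order.TTheory GRing.Theory Num.Theory.
Local Open Scope ring_scope.

Lemma natinf_spec (P : nat -> Prop) : (exists n, P n) -> P (natinf P).
Proof.
move=> [n Pn].
have least : exists k, P k /\ forall m, P m -> (k <= m)%N.
  elim/ltn_ind: n Pn => n IH Pn.
  case: (classic (exists m, (m < n)%N /\ P m)) => [[m [lt_mn Pm]]|no_smaller].
    exact: IH lt_mn Pm.
  exists n; split => // m Pm; rewrite leqNgt; apply/negP => lt_mn.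
  by apply: no_smaller; exists m.
exact: (proj1 (epsilon_spec (inhabits 0%N) _ least)).
Qed.

Section ProjectiveClasses.
Variable G : zmodType.

Definition commensurable (x y : G) : Prop :=
  exists a b : int, x *~ a = y *~ b /\ x *~ a != 0.

Local Notation simc := (clos_refl_sym_trans G (@simp G)).

Lemma infinite_order_neq0 (x : G) : infinite_order x -> x != 0.
Proof. by move=> /(_ 1%N isT); rewrite mulr1n. Qed.

Lemma infinite_order_mulrz_neq0 (x : G) (n : int) :
  infinite_order x -> n != 0 -> x *~ n != 0.
Proof.
move=> ox; case: n => [m|m] nz_n; first by apply: ox; case: m nz_n.
by rewrite NegzE mulrNz oppr_eq0; apply: ox.
Qed.

Lemma infinite_order_mulrz (x : G) (n : int) :
  infinite_order x -> n != 0 -> infinite_order (x *~ n).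
Proof.
move=> ox nz_n k k_gt0; rewrite -[_ *+ k]/(_ *~ k%:Z) mulrzA_C.
by apply: infinite_order_mulrz_neq0; rewrite // mulf_neq0 // -lt0n.
Qed.

Lemma infinite_order_mulrzK (x : G) (n : int) :
  infinite_order (x *~ n) -> infinite_order x.
Proof.
move=> oxn k k_gt0; apply: contra (oxn k k_gt0) => /eqP xk0.
by rewrite -[_ *+ k]/(_ *~ k%:Z) mulrzAC -[x *~ k%:Z]/(x *+ k) xk0 mul0rz.
Qed.

Lemma mulrz_neq0_int (x : G) (n : int) : x *~ n != 0 -> n != 0.
Proof. by apply: contraNneq => ->; rewrite mulr0z. Qed.

Lemma commensurable_refl (x : G) : x != 0 -> commensurable x x.
Proof. by move=> nz_x; exists 1, 1. Qed.

Lemma commensurable_sym (x y : G) : commensurable x y -> commensurable y x.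
Proof. by move=> [a [b [xy nz]]]; exists b, a; rewrite -xy. Qed.

Lemma commensurable_trans (x y z : G) : infinite_order x ->
  commensurable x y -> commensurable y z -> commensurable x z.
Proof.
move=> ox [a [b [xy nz_xa]]] [c [d [yz nz_yc]]].
exists (a * c), (b * d); split.
  by rewrite mulrzA xy mulrzAC yz -mulrzA mulrC.
apply: infinite_order_mulrz_neq0 => //.
by rewrite mulf_neq0 // (mulrz_neq0_int nz_xa, mulrz_neq0_int nz_yc).
Qed.

Lemma simp_sym (x y : G) : simp x y -> simp y x.
Proof. by move=> [nz_x [nz_y [M [r [s [xM yM]]]]]]; do 2 split=> //; exists M, s, r. Qed.

Lemma simp_infinite_order (x y : G) :
  simp x y -> infinite_order x -> infinite_order y.
Proof.
move=> [_ [nz_y [M [r [s [xM yM]]]]]]; subst x y => /infinite_order_mulrzK oM.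
exact: infinite_order_mulrz oM (mulrz_neq0_int nz_y).
Qed.

Lemma simp_commensurable (x y : G) :
  simp x y -> infinite_order x -> commensurable x y.
Proof.
move=> [_ [nz_y [M [r [s [xM yM]]]]]]; subst x y => oMr; exists s, r; split.
  by rewrite -!mulrzA mulrC.
exact: infinite_order_mulrz_neq0 oMr (mulrz_neq0_int nz_y).
Qed.

Lemma simc_infinite_order (x y : G) :
  simc x y -> infinite_order x <-> infinite_order y.
Proof.
elim=> {x y} [x y xy | x | x y _ IH | x y z _ IHxy _ IHyz]; try tauto.
by split; apply: simp_infinite_order; last apply: simp_sym.
Qed.

Lemma simc_commensurable (x y : G) :
  simc x y -> infinite_order x -> commensurable x y.
Proof.
elim=> {x y} [x y | x | x y xy IH | x y z xy IHxy _ IHyz] ox.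
- exact: simp_commensurable.
- exact/commensurable_refl/infinite_order_neq0.
- exact/commensurable_sym/IH/(simc_infinite_order xy).
- exact: commensurable_trans ox (IHxy ox) (IHyz ((simc_infinite_order xy).1 ox)).
Qed.

Lemma sim_refl (x : G) : x != 0 -> sim x x.
Proof. by move=> nz_x; do 2 split=> //; apply: rst_refl. Qed.

Variable g4 : G -> nat.
Hypothesis g4_eq0 : forall x : G, g4 x = 0%N <-> x = 0.

Lemma delta_eq0_simc (x y : G) :
  x != 0 -> y != 0 -> delta g4 x y = 0%N -> simc x y.
Proof.
move=> nz_x nz_y delta0.
have := @natinf_spec (fun n => exists x' y', sim x x' /\ sim y y' /\ dist g4 x' y' = n).
rewrite -/(delta g4 x y) delta0; case.
  by exists (dist g4 x y), x, y; split; [exact: sim_refl | split; first exact: sim_refl].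
move=> x' [y' [[_ [_ xx']] [[_ [_ yy']] /g4_eq0 /eqP]]].
rewrite subr_eq0 => /eqP eq_x'y'.
by apply: rst_trans xx' _; rewrite eq_x'y'; apply: rst_sym.
Qed.

Lemma pairmap_delta_eq0_simc (x : G) (xs : seq G) :
  x != 0 -> all (fun y => y != 0) xs -> sumn (pairmap (delta g4) x xs) = 0%N ->
  simc x (last x xs).
Proof.
elim: xs x => [|y ys IH] x nz_x /=; first by move=> _ _; apply: rst_refl.
move=> /andP [nz_y nz_ys] /eqP; rewrite addn_eq0 => /andP [/eqP xy /eqP yys].
exact: rst_trans (delta_eq0_simc nz_x nz_y xy) (IH y nz_y nz_ys yys).
Qed.

Lemma Delta_eq0_simc (K J : G) :
  K != 0 -> J != 0 -> Delta g4 K J = 0%N -> simc K J.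
Proof.
move=> nz_K nz_J Delta0.
have := @natinf_spec (fun n => exists (x0 : G) (xs : seq G),
    x0 != 0 /\ all (fun x => x != 0) xs /\
    sim K x0 /\ sim (last x0 xs) J /\ sumn (pairmap (delta g4) x0 xs) = n).
rewrite -/(Delta g4 K J) Delta0; case.
  exists (delta g4 K J), K, [:: J].
  by rewrite /= nz_J addn0; do 3 split=> //; [exact: sim_refl | split; first exact: sim_refl].
move=> x0 [xs [nz_x0 [nz_xs [[_ [_ Kx0]] [[_ [_ xsJ]] chain0]]]]].
apply: rst_trans Kx0 _; apply: rst_trans xsJ.
exact: pairmap_delta_eq0_simc.
Qed.

End ProjectiveClasses.

Theorem theorem6p2 (G : zmodType) (g4 : G -> nat)
  (g4_zero : forall x : G, g4 x = 0%N <-> x = 0)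
  (K J : G) (HK : infinite_order K) (HJ : infinite_order J)
  (HD : Delta g4 K J = 0%N) :
  exists a b : int, K *~ a = J *~ b /\ K *~ a != 0.
Proof.
have K_sim_J := Delta_eq0_simc g4_zero (infinite_order_neq0 HK) (infinite_order_neq0 HJ) HD.
exact: simc_commensurable K_sim_J HK.
Qed.
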